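(* Let $\Gamma$ be a groupoid over a set $B$ with source and target maps $\alpha,\beta:\Gamma\to B$, and let $L\subset\Gamma$. The following are equivalent: (1) there is a subset $K\subset\Gamma$ such that $LK=E_\Gamma$ and $KL=E_\Gamma$; (2) the restrictions $\alpha|_L:L\to B$ and $\beta|_L:L\to B$ are bijections.
   Context: A groupoid over a set $B$ is a set $\Gamma$ with surjections $\alpha,\beta:\Gamma\to B$, a product $\gamma_1\gamma_2$ defined when $\beta(\gamma_1)=\alpha(\gamma_2)$, identities $e_b$ ($b\in B$) and inverses $\gamma^{-1}$, satisfying $\alpha(\gamma_1\gamma_2)=\alpha(\gamma_1)$, $\beta(\gamma_1\gamma_2)=\beta(\gamma_2)$, $\alpha(e_b)=\beta(e_b)=b$, $\alpha(\gamma^{-1})=\beta(\gamma)$, $\beta(\gamma^{-1})=\alpha(\gamma)$, and the usual associativity, unit and inverse axioms. For subsets $L_1,L_2\subset\Gamma$, $L_1L_2=\{\gamma_1\gamma_2:\gamma_1\in L_1,\gamma_2\in L_2,\beta(\gamma_1)=\alpha(\gamma_2)\}$, and $E_\Gamma=\{e_b:b\in B\}$. *)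

From Stdlib Require Export FinFun.

(* A groupoid over B.  The product [mul] is a total function on Gamma x Gamma,
   but it is only constrained (and only ever used) on composable pairs,
   i.e. when [beta g1 = alpha g2]. *)
Record Groupoid (B : Type) := {
  carrier :> Type;
  alpha : carrier -> B;
  beta : carrier -> B;
  mul : carrier -> carrier -> carrier;
  unit : B -> carrier;
  inv : carrier -> carrier;
  alpha_surj : forall b, exists g, alpha g = b;
  beta_surj : forall b, exists g, beta g = b;
  alpha_mul : forall g1 g2, beta g1 = alpha g2 -> alpha (mul g1 g2) = alpha g1;
  beta_mul : forall g1 g2, beta g1 = alpha g2 -> beta (mul g1 g2) = beta g2;
  alpha_unit : forall b, alpha (unit b) = b;
  beta_unit : forall b, beta (unit b) = b;
  alpha_inv : forall g, alpha (inv g) = beta g;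
  beta_inv : forall g, beta (inv g) = alpha g;
  mulA : forall g1 g2 g3, beta g1 = alpha g2 -> beta g2 = alpha g3 ->
    mul (mul g1 g2) g3 = mul g1 (mul g2 g3);
  mul_unitl : forall g, mul (unit (alpha g)) g = g;
  mul_unitr : forall g, mul g (unit (beta g)) = g;
  mul_invr : forall g, mul g (inv g) = unit (alpha g);
  mul_invl : forall g, mul (inv g) g = unit (beta g)
}.

Arguments alpha {B G} _ : rename.
Arguments beta {B G} _ : rename.
Arguments mul {B G} _ _ : rename.
Arguments unit {B G} _ : rename.
Arguments inv {B G} _ : rename.

Definition setmul {B} {G : Groupoid B} (L1 L2 : G -> Prop) : G -> Prop :=
  fun g => exists g1 g2, L1 g1 /\ L2 g2 /\ beta g1 = alpha g2 /\ g = mul g1 g2.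

Definition units_set {B} {G : Groupoid B} : G -> Prop :=
  fun g => exists b, g = unit b.

Definition set_eq {T} (P Q : T -> Prop) : Prop := forall x, P x <-> Q x.

Definition restrict {B} {G : Groupoid B} (L : G -> Prop) (f : G -> B)
  : {g : G | L g} -> B := fun x => f (proj1_sig x).

(* If [LK = KL = E], then whenever [l ∈ L] and [k ∈ K] are composable the product is an
   identity, so [l] and [k] are mutually inverse; consequently every [x ∈ L] is the inverse
   of any [k ∈ K] ending at [α x], which forces [α] to be injective on [L], and factoring
   [e_b ∈ LK] shows it is onto.  Conversely [K := L⁻¹] works.  Every statement about [β]
   is the statement about [α] in the opposite groupoid, where the product is reversed. *)
From Stdlib Require Import ClassicalEpsilon ProofIrrelevance.

Definition InjectiveOn {T U} (L : T -> Prop) (f : T -> U) : Prop :=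
  forall x y, L x -> L y -> f x = f y -> x = y.

Definition SurjectiveOn {T U} (L : T -> Prop) (f : T -> U) : Prop :=
  forall u, exists x, L x /\ f x = u.

Lemma injective_surjective_bijective {T U} (f : T -> U) :
  Injective f -> Surjective f -> Bijective f.
Proof.
  intros f_inj f_surj.
  exists (fun u => proj1_sig (constructive_indefinite_description _ (f_surj u))).
  split.
  - intro x. apply f_inj.
    exact (proj2_sig (constructive_indefinite_description _ (f_surj (f x)))).
  - intro u. exact (proj2_sig (constructive_indefinite_description _ (f_surj u))).
Qed.

Lemma restrict_bijective {B} {G : Groupoid B} (L : G -> Prop) (f : G -> B) :
  Bijective (restrict L f) <-> InjectiveOn L f /\ SurjectiveOn L f.
Proof.
  unfold restrict. split.
  - intros [g [gK Kg]]. split.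
    + intros x y Lx Ly fxy.
      change x with (proj1_sig (exist L x Lx)). change y with (proj1_sig (exist L y Ly)).
      rewrite <- (gK (exist L x Lx)), <- (gK (exist L y Ly)). simpl. now rewrite fxy.
    + intro u. exists (proj1_sig (g u)). split; [exact (proj2_sig (g u)) | apply Kg].
  - intros [f_inj f_surj]. apply injective_surjective_bijective.
    + intros [x Lx] [y Ly] fxy. apply subset_eq_compat. exact (f_inj x y Lx Ly fxy).
    + intro u. destruct (f_surj u) as [x [Lx fx]]. now exists (exist L x Lx).
Qed.

Definition setinv {B} {G : Groupoid B} (L : G -> Prop) : G -> Prop :=
  fun k => exists l, L l /\ k = inv l.

Section Groupoid.
Variables (B : Type) (G : Groupoid B).

Definition opposite : Groupoid B := {|
  carrier := G;
  alpha := beta;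
  beta := alpha;
  mul g h := mul h g;
  unit := unit;
  inv := inv;
  alpha_surj := beta_surj B G;
  beta_surj := alpha_surj B G;
  alpha_mul g h gh := beta_mul B G h g (eq_sym gh);
  beta_mul g h gh := alpha_mul B G h g (eq_sym gh);
  alpha_unit := beta_unit B G;
  beta_unit := alpha_unit B G;
  alpha_inv := beta_inv B G;
  beta_inv := alpha_inv B G;
  mulA g1 g2 g3 g12 g23 := eq_sym (mulA B G g3 g2 g1 (eq_sym g23) (eq_sym g12));
  mul_unitl := mul_unitr B G;
  mul_unitr := mul_unitl B G;
  mul_invr := mul_invl B G;
  mul_invl := mul_invr B G
|}.

Lemma setmul_opposite (L1 L2 : G -> Prop) :
  set_eq (setmul (G := opposite) L1 L2) (setmul L2 L1).
Proof.
  intro g. split.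
  - intros [g1 [g2 [L1g1 [L2g2 [comp ->]]]]]. now exists g2, g1.
  - intros [g2 [g1 [L2g2 [L1g1 [comp ->]]]]]. now exists g1, g2.
Qed.

Lemma setmul_opposite_units (L1 L2 : G -> Prop) :
  set_eq (setmul L2 L1) units_set -> set_eq (setmul (G := opposite) L1 L2) units_set.
Proof.
  intros HE g. exact (iff_trans (setmul_opposite L1 L2 g) (HE g)).
Qed.

Lemma alpha_mul_unit (g h : G) c : beta g = alpha h -> mul g h = unit c -> alpha g = c.
Proof.
  intros comp gh. rewrite <- (alpha_mul B G g h comp), gh. apply alpha_unit.
Qed.

Lemma beta_mul_unit (g h : G) c : beta g = alpha h -> mul g h = unit c -> beta h = c.
Proof.
  intros comp gh. rewrite <- (beta_mul B G g h comp), gh. apply beta_unit.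
Qed.

(* [h = (g⁻¹ g) h = g⁻¹ (g h) = g⁻¹]. *)
Lemma mul_unit_invr (g h : G) c : beta g = alpha h -> mul g h = unit c -> h = inv g.
Proof.
  intros comp gh.
  assert (c_alpha : c = alpha g) by (symmetry; exact (alpha_mul_unit g h c comp gh)).
  rewrite <- (mul_unitl B G h), <- comp, <- mul_invl, mulA by (rewrite ?beta_inv; auto).
  rewrite gh, c_alpha, <- beta_inv. apply mul_unitr.
Qed.

Section Factorization.
Variables (L K : G -> Prop).
Hypotheses (LK_units : set_eq (setmul L K) units_set)
           (KL_units : set_eq (setmul K L) units_set).

Lemma alpha_injective_on_factor : InjectiveOn L alpha.
Proof.
  assert (inv_of_K : forall k x, K k -> L x -> beta k = alpha x -> x = inv k).
  { intros k x Kk Lx comp.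
    destruct (proj1 (KL_units (mul k x))) as [c kx]; [now exists k, x |].
    exact (mul_unit_invr k x c comp kx). }
  intros x y Lx Ly xy.
  destruct (proj2 (LK_units (unit (alpha x)))) as [l [k [Ll [Kk [comp lk]]]]];
    [now exists (alpha x) |].
  assert (k_end : beta k = alpha x) by exact (beta_mul_unit l k _ comp (eq_sym lk)).
  rewrite (inv_of_K k x), (inv_of_K k y); congruence.
Qed.

Lemma alpha_surjective_on_factor : SurjectiveOn L alpha.
Proof.
  intro c.
  destruct (proj2 (LK_units (unit c))) as [l [k [Ll [Kk [comp lk]]]]]; [now exists c |].
  exists l. split; [exact Ll | exact (alpha_mul_unit l k c comp (eq_sym lk))].
Qed.

End Factorization.

Lemma setmul_setinv_units (L : G -> Prop) :
  SurjectiveOn L alpha -> InjectiveOn L beta -> set_eq (setmul L (setinv L)) units_set.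
Proof.
  intros alpha_surj_L beta_inj_L g. split.
  - intros [l [k [Ll [[l' [Ll' ->]] [comp ->]]]]].
    rewrite alpha_inv in comp.
    rewrite (beta_inj_L l l' Ll Ll' comp), mul_invr. now exists (alpha l').
  - intros [b ->]. destruct (alpha_surj_L b) as [l [Ll <-]].
    exists l, (inv l). repeat split; [exact Ll | now exists l | | ].
    + now rewrite alpha_inv.
    + now rewrite mul_invr.
Qed.

End Groupoid.

Theorem proposition7 (B : Type) (G : Groupoid B) (L : G -> Prop) :
  (exists K : G -> Prop,
      set_eq (setmul L K) units_set /\ set_eq (setmul K L) units_set)
  <->
  (Bijective (restrict L alpha) /\ Bijective (restrict L beta)).
Proof.
  rewrite !restrict_bijective. split.
  - intros [K [LK_units KL_units]].
    pose proof (setmul_opposite_units B G K L LK_units) as KL_units_op.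
    pose proof (setmul_opposite_units B G L K KL_units) as LK_units_op.
    split; split.
    + exact (alpha_injective_on_factor B G L K LK_units KL_units).
    + exact (alpha_surjective_on_factor B G L K LK_units).
    + exact (alpha_injective_on_factor B (opposite B G) L K LK_units_op KL_units_op).
    + exact (alpha_surjective_on_factor B (opposite B G) L K LK_units_op).
  - intros [[alpha_inj_L alpha_surj_L] [beta_inj_L beta_surj_L]].
    exists (setinv L). split.
    + exact (setmul_setinv_units B G L alpha_surj_L beta_inj_L).
    + intro g. apply (iff_trans (iff_sym (setmul_opposite B G L (setinv L) g))).
      exact (setmul_setinv_units B (opposite B G) L beta_surj_L alpha_inj_L g).
Qed.
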